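(* For all integers $n\geq 0$, \[ \sum_{k=0}^{\lfloor (n+1)/2\rfloor}(-1)^k\frac{\binom{2(n-k)}{n-k}}{\binom nk}\frac{(n+1-2k)_{2k}}{(k!)^2}=2^n \] and \[ \sum_{k=0}^{\lfloor (n+1)/2\rfloor}(-1)^k\frac{\binom{2(n-k)}{n-k}}{\binom nk}\frac{(n+1-2k)_{2k}}{(k!)^2}O_{n-k}=2^nH_n. \]
   Context: $(\lambda)_m=\lambda(\lambda+1)\cdots(\lambda+m-1)$ with $(\lambda)_0=1$ is the Pochhammer symbol. $H_n=\sum_{j=1}^n\frac1j$ ($H_0=0$) and $O_n=\sum_{j=1}^n\frac1{2j-1}$ ($O_0=0$). Terms with $k>n$ vanish because of the factor $(n+1-2k)_{2k}=0$ (by convention such terms are $0$; this only occurs for $n=0$... not at all, since $\lfloor (n+1)/2\rfloor\le n$ for $n\ge1$ and the sum is the single term $k=0$ for $n=0$). *)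

From mathcomp Require Import all_boot all_order all_algebra.
Set Implicit Arguments. Unset Strict Implicit. Unset Printing Implicit Defensive.
Import Order.TTheory GRing.Theory Num.Theory.
Local Open Scope ring_scope.

Definition pochhammer (x : rat) (m : nat) : rat :=
  \prod_(i < m) (x + i%:R).

Definition harmonic (n : nat) : rat :=
  \sum_(1 <= j < n.+1) (j%:R)^-1.

Definition oddharmonic (n : nat) : rat :=
  \sum_(1 <= j < n.+1) (2 * j%:R - 1)^-1.

Definition thm11_term (n k : nat) : rat :=
  (-1) ^+ k * ('C(2 * (n - k), n - k)%:R / 'C(n, k)%:R)
  * (pochhammer (n%:R + 1 - (2 * k)%:R) (2 * k) / (k`!%:R) ^+ 2).

From mathcomp Require Import all_boot all_order all_algebra.
From mathcomp Require Import ring zify.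
Set Implicit Arguments. Unset Strict Implicit. Unset Printing Implicit Defensive.
Import Order.TTheory GRing.Theory Num.Theory.
Local Open Scope ring_scope.

(* After cancelling factorials the k-th summand is
   (-1)^k C(n-k, k) C(2(n-k), n-k), so both sums are values at n of the
   transform  T u n = sum_m (-1)^(n-m) C(m, n-m) u m  applied to the central
   binomial coefficients c m = C(2m, m) and to c O.  A binomial identity yields
   (n+1) T u (n+1) - 2n T u n = T (D u) n  with  D u m = (m+1) u (m+1) - 4m u m.
   Now D c = 2 c and D (c O) = 2 c O + 2 c, hence T c (n+1) = 2 T c n and
   T (c O) (n+1) = 2 T (c O) n + 2^(n+1) / (n+1), which give 2^n and 2^n H_n. *)

Lemma binom_diag_rec (m k : nat) :
  ((m.+1 + k).+1 * 'C(m.+1, k.+1) + 2 * (m.+1 + k) * 'C(m.+1, k) =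
   m.+1 * 'C(m, k.+1) + 4 * m.+1 * 'C(m.+1, k))%N.
Proof.
have shift_low := mul_bin_left m.+1 k.
have shift_top := mul_bin_down m.+1 k.+1; rewrite /= in shift_top.
rewrite shift_top.
have [le_km | lt_mk] := leqP k m.+1; first by nia.
by rewrite !bin_small ?muln0 // ltnW.
Qed.

Section DiagonalTransform.
Variable R : comPzRingType.

Definition diag_coef (n m : nat) : R :=
  if (m <= n)%N then (-1) ^+ (n - m) * 'C(m, n - m)%:R else 0.

Definition diag_transform (u : nat -> R) (n : nat) : R :=
  \sum_(0 <= m < n.+1) diag_coef n m * u m.

Definition diag_lowering (u : nat -> R) (m : nat) : R :=
  m.+1%:R * u m.+1 - (4 * m)%:R * u m.

Lemma diag_coef_gt n m : (n < m)%N -> diag_coef n m = 0.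
Proof. by rewrite /diag_coef ltnNge => /negbTE ->. Qed.

Lemma diag_coef_rec n m :
  n.+1%:R * diag_coef n.+1 m - (2 * n)%:R * diag_coef n m
  = m%:R * diag_coef n m.-1 - (4 * m)%:R * diag_coef n m.
Proof.
case: m => [|m].
  rewrite /diag_coef !mul0r subr0 !subn0 /=.
  by case: n => [|n]; rewrite !bin0n /=; ring.
have [lt_nm | le_mn] := ltnP n m.
  have lt_nSm : (n < m.+1)%N by exact: ltnW.
  by rewrite !diag_coef_gt // !mulr0 subrr.
move: le_mn; rewrite leq_eqVlt => /predU1P[<- | lt_mn].
  by rewrite /diag_coef /= ltnn !subnn !bin0 ifT // !mulr0 !subr0.
have [k ->] : exists k, n = (m.+1 + k)%N by exists (n - m.+1)%N; lia.
rewrite /diag_coef /= !ifT; try lia.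
have -> : ((m.+1 + k).+1 - m.+1 = k.+1)%N by lia.
have -> : (m.+1 + k - m = k.+1)%N by lia.
rewrite addKn !exprS.
transitivity (- (-1) ^+ k * ((m.+1 + k).+1 * 'C(m.+1, k.+1)
                            + 2 * (m.+1 + k) * 'C(m.+1, k))%:R : R); first ring.
by rewrite binom_diag_rec; ring.
Qed.

Lemma diag_transform_rec u n :
  n.+1%:R * diag_transform u n.+1 - (2 * n)%:R * diag_transform u n
  = diag_transform (diag_lowering u) n.
Proof.
have extend : diag_transform u n = \sum_(0 <= m < n.+2) diag_coef n m * u m.
  by rewrite big_nat_recr //= diag_coef_gt // mul0r addr0.
rewrite extend !mulr_sumr -sumrB.
under eq_bigr do rewrite mulrA mulrA -mulrBl diag_coef_rec mulrBl.
rewrite sumrB /diag_transform /diag_lowering.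
under [RHS]eq_bigr do rewrite mulrBr.
rewrite sumrB; congr (_ - _).
  rewrite big_nat_recl //= mulr0n !mul0r add0r.
  by apply: eq_bigr => m _; ring.
rewrite big_nat_recr //= diag_coef_gt // mulr0 mul0r addr0.
by apply: eq_bigr => m _; ring.
Qed.

Lemma eq_diag_transform u v n : u =1 v -> diag_transform u n = diag_transform v n.
Proof. by move=> eq_uv; apply: eq_bigr => m _; rewrite eq_uv. Qed.

Lemma diag_transformD u v n :
  diag_transform (fun m => u m + v m) n = diag_transform u n + diag_transform v n.
Proof. by rewrite -big_split; apply: eq_bigr => m _; rewrite mulrDr. Qed.

Lemma diag_transformZ a u n :
  diag_transform (fun m => a * u m) n = a * diag_transform u n.
Proof. by rewrite mulr_sumr; apply: eq_bigr => m _; ring. Qed.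

Lemma diag_transform0 u : diag_transform u 0 = u 0.
Proof. by rewrite /diag_transform big_nat1 /diag_coef subnn bin0 mulr1 mul1r. Qed.

End DiagonalTransform.

Definition central_binom (m : nat) : rat := 'C(m.*2, m)%:R.

Lemma mul_central_binS m :
  (m.+1 * 'C((m.+1).*2, m.+1) = 2 * m.*2.+1 * 'C(m.*2, m))%N.
Proof.
have diag1 := mul_bin_diag m.*2.+2 m.
have diag2 := mul_bin_diag m.*2.+1 m.
have sym : 'C(m.*2.+1, m) = 'C(m.*2.+1, m.+1).
  by rewrite -[in RHS]bin_sub; [congr binomial|]; lia.
rewrite /= in diag1 diag2.
by rewrite doubleS -diag1 sym -mulnA diag2; lia.
Qed.

Lemma central_binomS m :
  m.+1%:R * central_binom m.+1 = 2 * (m.*2.+1)%:R * central_binom m.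
Proof. by rewrite /central_binom -!natrM mul_central_binS. Qed.

Lemma oddharmonicS m : oddharmonic m.+1 = oddharmonic m + (m.*2.+1)%:R^-1.
Proof.
rewrite /oddharmonic big_nat_recr //=; congr (_ + _^-1).
by rewrite -muln2; ring.
Qed.

Lemma harmonicS n : harmonic n.+1 = harmonic n + n.+1%:R^-1.
Proof. by rewrite /harmonic big_nat_recr. Qed.

Lemma diag_lowering_central_binom m :
  diag_lowering central_binom m = 2 * central_binom m.
Proof. by rewrite /diag_lowering central_binomS -muln2; ring. Qed.

Lemma diag_lowering_central_binom_odd m :
  diag_lowering (fun i => central_binom i * oddharmonic i) m
  = 2 * (central_binom m * oddharmonic m) + 2 * central_binom m.
Proof.
rewrite /diag_lowering [m.+1%:R * _]mulrA central_binomS oddharmonicS -muln2.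
by field; rewrite -(natrM _ m 2) nat1r pnatr_eq0.
Qed.

Lemma diag_transform_central_binom n : diag_transform central_binom n = 2 ^+ n.
Proof.
elim: n => [|n IHn]; first by rewrite diag_transform0 /central_binom bin0.
have := diag_transform_rec central_binom n.
rewrite (eq_diag_transform _ diag_lowering_central_binom) diag_transformZ IHn.
move/(canRL (subrK _)) => rec.
apply: (@mulfI _ n.+1%:R); first by rewrite pnatr_eq0.
by rewrite rec exprS; ring.
Qed.

Lemma diag_transform_central_binom_odd n :
  diag_transform (fun m => central_binom m * oddharmonic m) n = 2 ^+ n * harmonic n.
Proof.
elim: n => [|n IHn].
  by rewrite diag_transform0 /oddharmonic /harmonic !big_geq // mulr0.
have := diag_transform_rec (fun m => central_binom m * oddharmonic m) n.
rewrite (eq_diag_transform _ diag_lowering_central_binom_odd).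
rewrite diag_transformD !diag_transformZ IHn diag_transform_central_binom.
move/(canRL (subrK _)) => rec.
apply: (@mulfI _ n.+1%:R); first by rewrite pnatr_eq0.
rewrite rec exprS harmonicS.
by field; rewrite nat1r pnatr_eq0.
Qed.

Lemma pochhammerS x j : pochhammer x j.+1 = pochhammer x j * (x + j%:R).
Proof. by rewrite /pochhammer big_ord_recr. Qed.

Lemma fact_pochhammer a j : a`!%:R * pochhammer a.+1%:R j = (a + j)`!%:R.
Proof.
elim: j => [|j IHj]; first by rewrite /pochhammer big_ord0 mulr1 addn0.
by rewrite pochhammerS mulrA IHj addnS factS natrM mulrC -natrD addSn.
Qed.

Lemma fact_neq0 m : m`!%:R != 0 :> rat.
Proof. by rewrite pnatr_eq0 -lt0n fact_gt0. Qed.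

Lemma thm11_termE n k : (2 * k <= n.+1)%N ->
  thm11_term n k = (-1) ^+ k * 'C(n - k, k)%:R * central_binom (n - k).
Proof.
move=> le_2k_Sn.
rewrite /thm11_term /central_binom mul2n.
have [le_2k_n | lt_n_2k] := leqP (2 * k) n; last first.
  have n_eq : n.+1 = (2 * k)%N by lia.
  have -> : n%:R + 1 - (2 * k)%:R = 0 :> rat by rewrite natr1 n_eq subrr.
  rewrite (bin_small (_ : n - k < k)%N); last by lia.
  by rewrite -n_eq /pochhammer big_ord_recl /= add0r mulr0n !mul0r !mulr0 mul0r.
have poch : pochhammer (n%:R + 1 - (2 * k)%:R) (2 * k)
            = n`!%:R / (n - 2 * k)`!%:R.
  have -> : n%:R + 1 - (2 * k)%:R = (n - 2 * k).+1%:R :> rat.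
    by rewrite natr1 -natrB -?subSn // leqW.
  have := fact_pochhammer (n - 2 * k) (2 * k); rewrite subnK // => <-.
  by rewrite [_ * pochhammer _ _]mulrC mulfK ?fact_neq0.
have binom_fact (a b : nat) : (b <= a)%N ->
    'C(a, b)%:R = a`!%:R / (b`!%:R * (a - b)`!%:R) :> rat.
  move=> le_ba.
  by rewrite -(bin_fact le_ba) !natrM mulfK // mulf_neq0 // fact_neq0.
have le_kn : (k <= n)%N by lia.
have le_k_nk : (k <= n - k)%N by lia.
rewrite poch (binom_fact _ _ le_kn) (binom_fact _ _ le_k_nk).
have -> : (n - 2 * k = n - k - k)%N by lia.
move: (fact_neq0 n) (fact_neq0 k) (fact_neq0 (n - k)) (fact_neq0 (n - k - k)).
move: n`!%:R k`!%:R (n - k)`!%:R (n - k - k)`!%:R => a b c d *.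
by field; apply/and4P.
Qed.

Lemma thm11_sumE (w : nat -> rat) n :
  \sum_(0 <= k < (n.+1)./2.+1) thm11_term n k * w (n - k)%N
  = diag_transform (fun m => central_binom m * w m) n.
Proof.
rewrite -divn2.
have le_half : ((n.+1 %/ 2).+1 <= n.+1)%N by lia.
rewrite /diag_transform [RHS]big_nat_rev [RHS](big_cat_nat (leq0n _) le_half).
rewrite [X in _ = _ + X]big_nat_cond [X in _ = _ + X]big1 ?addr0; last first.
  move=> k /andP[/andP[lt_half lt_k] _].
  rewrite add0n subSS /diag_coef ifT; last lia.
  by rewrite bin_small ?mulr0 ?mul0r //; lia.
apply: eq_big_nat => k /andP[_ lt_k].
rewrite thm11_termE; last lia.
rewrite add0n subSS /diag_coef ifT; last lia.
have -> : (n - (n - k) = k)%N by lia.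
by rewrite mulrA.
Qed.

Theorem theorem11 (n : nat) :
  \sum_(0 <= k < (n.+1)./2.+1) thm11_term n k = 2 ^+ n
  /\
  \sum_(0 <= k < (n.+1)./2.+1) thm11_term n k * oddharmonic (n - k)
    = 2 ^+ n * harmonic n.
Proof.
split; last by rewrite thm11_sumE diag_transform_central_binom_odd.
have := thm11_sumE (fun _ => 1) n.
under eq_bigr do rewrite mulr1.
move=> ->; rewrite -diag_transform_central_binom.
by apply: eq_diag_transform => m; rewrite mulr1.
Qed.
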